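(* Let $\Gamma$ be a finite simple graph with vertex set $\{1,\dots,V\}$. Let $\mathcal E$ be its set of directed edges, containing both orientations of each undirected edge, so that $|\mathcal E|$ is twice the number of undirected edges. Identify subsets $b\subseteq\mathcal E$ with bit-vectors in $\{0,1\}^{|\mathcal E|}$, and let $\mathrm{popcnt}(b)=|b|$. For $b\subseteq\mathcal E$, let $A(b)$ be the $V\times V$ matrix with $A(b)_{i,j}=1$ if $(j,i)\in b$ and $0$ otherwise. Fix $n=|\mathcal E|/2$ and set $\widetilde N_b=\mathrm{tr}\big(A(b)^n\big)$. Define $$N_b=\sum_{b'\subseteq b}(-1)^{|b|-|b'|}\,\widetilde N_{b'}.$$ Equivalently, ordering the bit-vectors in binary order, $N=Y_{|\mathcal E|}\widetilde N$, where $Y_1=\begin{pmatrix}1&0\\-1&1\end{pmatrix}$ and $Y_m=Y_1\otimes Y_{m-1}$ (Kronecker product) for $m>1$. Let $\mathcal B_{\rm Euler}$ be the set of subsets $b\subseteq\mathcal E$ that contain exactly one orientation of each undirected edge. Then the number $N_{\rm Euler}(\Gamma)$ of Eulerian cycles of $\Gamma$ satisfies $$N_{\rm Euler}(\Gamma)=\frac{2}{|\mathcal E|}\sum_{b\in\mathcal B_{\rm Euler}}N_b.$$ Here Eulerian cycles are counted up to cyclic shift, and a cycle and its reversal are counted as different.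
   Context: An Eulerian cycle is a closed walk traversing every undirected edge of $\Gamma$ exactly once. A periodic orbit of length $n$ is a closed walk of $n$ directed edges, considered up to cyclic shifts. Its support is the set of directed edges it uses. Its repetition number $r_p$ is the number of times it is a repetition of a shorter orbit. One has $\widetilde N_b=n\sum_{\mathrm{supp}(p)\subseteq b}1/r_p$ and $N_b=n\sum_{\mathrm{supp}(p)=b}1/r_p$, where the sums run over periodic orbits of length $n$. *)

From mathcomp Require Import all_boot all_order all_algebra.
Set Implicit Arguments. Unset Strict Implicit. Unset Printing Implicit Defensive.
Import GRing.Theory Num.Theory.

(* Vertices are 'I_V (i.e. {0,...,V-1}, standing for {1,...,V}).
   A finite simple graph is a symmetric irreflexive relation e on 'I_V. *)
Definition simple_graph (V : nat) (e : rel 'I_V) : Prop :=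
  symmetric e /\ irreflexive e.

Definition dedges (V : nat) (e : rel 'I_V) : {set 'I_V * 'I_V} :=
  [set p | e p.1 p.2].

Definition swap_de (V : nat) (p : 'I_V * 'I_V) : 'I_V * 'I_V := (p.2, p.1).

Definition Amat (V : nat) (b : {set 'I_V * 'I_V}) : 'M[int]_V :=
  \matrix_(i, j) ((((j, i) \in b) : nat)%:R)%R.

Definition Ntilde (V : nat) (e : rel 'I_V) (b : {set 'I_V * 'I_V}) : int :=
  (\tr (Amat b ^+ (#|dedges e| %/ 2)))%R.

Definition Nb (V : nat) (e : rel 'I_V) (b : {set 'I_V * 'I_V}) : int :=
  (\sum_(b' : {set 'I_V * 'I_V} | b' \subset b)
     (-1) ^+ (#|b| - #|b'|)%N * Ntilde e b')%R.

Definition B_Euler (V : nat) (e : rel 'I_V) : {set {set 'I_V * 'I_V}} :=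
  [set b : {set 'I_V * 'I_V} | (b \subset dedges e) &&
     [forall p in dedges e, (p \in b) != (swap_de p \in b)]].

Definition nedges (V : nat) (e : rel 'I_V) : nat := #|dedges e| %/ 2.

(* An Eulerian cycle, as a sequence of m = nedges directed edges
   w_0, ..., w_{m-1}: each w_k is a directed edge, the walk is closed
   (head of w_k = tail of w_{k+1 mod m}), and every undirected edge is
   traversed exactly once (in one of its two orientations). *)
Definition is_euler_walk (V : nat) (e : rel 'I_V)
    (w : (nedges e).-tuple ('I_V * 'I_V)) : bool :=
  [&& all (fun p => p \in dedges e) w,
      [forall k : 'I_(nedges e),
         (tnth w k).2 == (nth (tnth w k) w ((k.+1) %% nedges e)).1] &
      [forall p in dedges e, count_mem p w + count_mem (swap_de p) w == 1]].

(* Eulerian cycles counted up to cyclic shift (a cycle and its reversal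
   are different): the number of rotation classes of Eulerian walks. *)
Definition N_Euler (V : nat) (e : rel 'I_V) : nat :=
  #|[set [set rot_tuple k w | k : 'I_(nedges e)]
      | w in [set w : (nedges e).-tuple ('I_V * 'I_V) | @is_euler_walk V e w]]|.

From mathcomp Require Import all_boot all_order all_algebra ring.
Set Implicit Arguments. Unset Strict Implicit. Unset Printing Implicit Defensive.
Import GRing.Theory Num.Theory.
Local Open Scope ring_scope.

(* Expanding the entries of A(b)^n over index sequences shows that Ntilde_b
   counts the closed walks of n directed edges (n-tuples of chained edges, the
   head of each being the tail of the next, cyclically) all of whose edges lie
   in b.  Moebius inversion on the lattice of subsets then makes N_b the number
   of such walks whose set of edges is exactly b.  If b contains one
   orientation of every edge, then n = |E|/2 = |b|, so a closed walk with
   support b uses each edge of b exactly once: summing N_b over B_Euler counts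
   the Eulerian cycles written as sequences.  Since their edges are distinct,
   each Eulerian cycle has exactly n distinct rotations, and the factor
   2/|E| = 1/n counts them up to cyclic shift. *)

Lemma sum_subset_signed_indicator (R : comPzRingType) (T : finType) (S b : {set T}) :
  \sum_(b' : {set T} | b' \subset b) (-1) ^+ (#|b| - #|b'|)%N * ((S \subset b') : nat)%:R
  = ((S == b) : nat)%:R :> R.
Proof.
pose F i : R := ((i \in b) : nat)%:R.
pose G i : R := ((i \notin S) : nat)%:R * (if i \in b then -1 else 1).
(* The right side is \prod_i (F i + G i), whose i-th factor vanishes exactly
   when i lies in just one of S and b; its expansion over subsets is the left side. *)
have := @bigA_distr R 0 1 *%R +%R T F G.
have -> : \prod_i (F i + G i) = ((S == b) : nat)%:R.
  rewrite /F /G; have [->|nSb] := eqVneq S b.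
    by rewrite big1 // => i _; case: (i \in b); rewrite /= ?mul0r ?mul1r ?addr0 ?add0r.
  have [i] : exists i, (i \in b) != (i \in S).
    apply/existsP; apply: contraNT nSb; rewrite negb_exists => /forallP h.
    by apply/eqP/setP => i; have := h i; rewrite negbK => /eqP.
  rewrite (bigD1 i) //=; case: (i \in b); case: (i \in S) => //= _.
    by rewrite mul1r addrN mul0r.
  by rewrite mul0r addr0 mul0r.
move=> ->; rewrite [RHS](bigID (fun b' : {set T} => b' \subset b)) /= [X in _ + X]big1 ?addr0.
  apply: eq_bigr => b' b'b.
  rewrite (bigID (mem b')) /= big1 ?mul1r => [|i ib']; last first.
    by rewrite ib' /F (subsetP b'b i ib').
  rewrite (eq_bigr G) => [|i /negbTE-> //]; rewrite big_split /= [LHS]mulrC; congr (_ * _).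
    have [Sb'|/subsetPn[i iS nib']] := boolP (S \subset b').
      by rewrite big1 // => i nib'; rewrite (contra (subsetP Sb' i) nib').
    by rewrite (bigD1 i) //= iS mul0r.
  rewrite -big_mkcondr prodr_const; congr (_ ^+ _).
  rewrite -(cardsID b' b) (setIidPr b'b) addKn.
  by apply: eq_card => i; rewrite !inE.
move=> b' /subsetPn[i ib' nib].
by rewrite (bigD1 i) //= ib' /F (negbTE nib) mul0r.
Qed.

Lemma big_tuple_cons (R : nmodType) (T : finType) k (F : k.+1.-tuple T -> R) :
  \sum_(t : k.+1.-tuple T) F t = \sum_(x : T) \sum_(t : k.-tuple T) F [tuple of x :: t].
Proof.
rewrite pair_big /= (reindex (fun p : T * k.-tuple T => [tuple of p.1 :: p.2])) //=.
exists (fun t : k.+1.-tuple T => (thead t, [tuple of behead t])).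
  by move=> [x t] _ /=; rewrite theadE; congr (_, _); apply: val_inj.
by move=> t _ /=; rewrite [in RHS](tuple_eta t).
Qed.

Lemma cycle_nthP (T : Type) (r : rel T) (s : seq T) x0 :
  reflect (forall k, (k < size s)%N -> r (nth x0 s k) (nth x0 s (k.+1 %% size s)))
          (cycle r s).
Proof.
case: s => [|p s]; first by left.
rewrite /cycle; apply: (iffP (pathP x0)) => H k.
  rewrite /= ltnS => kl; have := H k; rewrite size_rcons => /(_ (leq_trans kl (leqnn _))).
  rewrite -rcons_cons nth_rcons /= ltnS kl nth_rcons.
  by case: ltngtP kl => // [kls _ | -> _]; [rewrite modn_small | rewrite modnn].
rewrite size_rcons => kl; have := H k; rewrite /= ltnS -ltnS kl => /(_ isT).
rewrite -rcons_cons nth_rcons /= ltnS -ltnS kl nth_rcons.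
have [kls|kls|->] := ltngtP k (size s).
- by rewrite modn_small.
- by rewrite ltnS leqNgt kls in kl.
- by rewrite modnn.
Qed.

Lemma all_mem_subset (T : finType) (s : seq T) (A : {set T}) :
  all (mem A) s = ([set x in s] \subset A).
Proof.
apply/allP/subsetP => sA x; first by rewrite inE => /sA.
by move=> xs; apply: sA; rewrite inE.
Qed.

Section ClosedWalks.
Variable V : nat.
Implicit Types (b : {set 'I_V * 'I_V}) (i j : 'I_V) (w : seq ('I_V * 'I_V)).

Definition chained : rel ('I_V * 'I_V) := fun p q => p.2 == q.1.

(* [walk_in b j i w]: the edges w, all in b, form a walk from j to i.  The
   reversed order of j and i matches A(b)_{i,j} = [(j, i) \in b]. *)
Fixpoint walk_in b j i w : bool :=
  if w is p :: w' then [&& p.1 == j, p \in b & walk_in b p.2 i w'] else j == i.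

Lemma walk_inE b x i w :
  walk_in b x.2 i w = [&& all (mem b) w, path chained x w & (last x w).2 == i].
Proof.
elim: w x => [|q w IH] x //=; rewrite IH /chained eq_sym.
by case: (x.2 == q.1); case: (q \in b); case: all.
Qed.

Lemma Amat_expE b k i j :
  (Amat b ^+ k) i j = \sum_(w : k.-tuple ('I_V * 'I_V)) (walk_in b j i w : nat)%:R.
Proof.
elim: k i j => [|k IH] i j.
  rewrite expr0 (big_pred1 [tuple]) => [|t]; last by symmetry; apply/eqP; apply: tuple0.
  by rewrite /= mxE eq_sym.
rewrite exprSr -mulmxE mxE big_tuple_cons.
pose G (x y : 'I_V) : int := \sum_(w : k.-tuple _) (walk_in b j i ((x, y) :: w) : nat)%:R.
rewrite (eq_bigr (fun p : 'I_V * 'I_V => G p.1 p.2)) => [|[] //].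
rewrite -(pair_bigA _ G) [RHS](bigD1 j) //=.
rewrite [X in _ = _ + X]big1 ?addr0 => [|x /negbTE xj]; last first.
  by apply: big1 => l _; apply: big1 => w _; rewrite /= xj.
apply: eq_bigr => l _; rewrite IH mulr_suml; apply: eq_bigr => w _.
by rewrite !mxE /= eqxx; case: walk_in; case: ((j, l) \in b); rewrite ?mulr1 ?mulr0.
Qed.

Lemma forall_chained_tuple n (w : n.-tuple ('I_V * 'I_V)) :
  [forall k : 'I_n, (tnth w k).2 == (nth (tnth w k) w (k.+1 %% n)).1]
  = cycle chained w.
Proof.
case: n w => [|n] w; first by rewrite (tuple0 w); apply/forallP => [[]].
have sz := size_tuple w; set x0 := tnth w ord0.
apply/forallP/(cycle_nthP _ _ x0) => H k.
  rewrite sz => kl; have := H (Ordinal kl); rewrite /chained !(tnth_nth x0) /=.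
  by rewrite (set_nth_default x0) // sz ltn_mod.
rewrite /chained (tnth_nth x0) (set_nth_default x0) ?sz ?ltn_mod //.
by have := H k; rewrite sz ltn_ord => /(_ isT).
Qed.

Lemma sum_walk_in_diag b w : w != [::] ->
  \sum_i (walk_in b i i w : nat)%:R = (all (mem b) w && cycle chained w : nat)%:R :> int.
Proof.
case: w => [//|p w] _; rewrite (bigD1 p.1) //= big1 ?addr0 => [|x xp]; last first.
  by rewrite eq_sym (negbTE xp).
rewrite eqxx -[p.2]/((p.2, p.2).2) walk_inE /= rcons_path.
by case: w => [|q w] /=; case: (p \in b).
Qed.

Lemma mxtrace_Amat_exp b n : (0 < n)%N ->
  \tr (Amat b ^+ n) = \sum_(w : n.-tuple ('I_V * 'I_V))
     (all (mem b) w && cycle chained w : nat)%:R.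
Proof.
move=> n_gt0; rewrite /mxtrace; under eq_bigr do rewrite Amat_expE.
rewrite exchange_big /=; apply: eq_bigr => w _; apply: sum_walk_in_diag.
by rewrite -size_eq0 size_tuple -lt0n.
Qed.

Lemma NbE (e : rel 'I_V) b : (0 < nedges e)%N ->
  Nb e b = \sum_(w : (nedges e).-tuple ('I_V * 'I_V))
     (cycle chained w && ([set p in w] == b) : nat)%:R.
Proof.
move=> m_gt0; rewrite /Nb /Ntilde.
under eq_bigr do rewrite (mxtrace_Amat_exp _ m_gt0) mulr_sumr.
rewrite exchange_big /=; apply: eq_bigr => w _.
rewrite -mulnb natrM -(sum_subset_signed_indicator _ [set p in w] b) mulr_sumr.
apply: eq_bigr => b' _; rewrite all_mem_subset -mulnb natrM.
by rewrite mulrA mulrC.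
Qed.

End ClosedWalks.

Arguments chained {V}.

Section RotationOrbits.
Variables (T : finType) (n : nat).
Hypothesis n_gt0 : (0 < n)%N.
Implicit Types w : n.-tuple T.

Definition rot_orbit w : {set n.-tuple T} := [set rot_tuple k w | k : 'I_n].

Lemma rot_orbit_id w : w \in rot_orbit w.
Proof. by apply/imsetP; exists (Ordinal n_gt0) => //; apply: val_inj; rewrite /= rot0. Qed.

Lemma card_rot_orbit w : uniq w -> #|rot_orbit w| = n.
Proof.
move=> uw; rewrite card_imset ?card_ord // => i j /(congr1 val) /= ij.
apply/val_inj/eqP; have x0 := tnth w i.
have := congr1 (nth x0 ^~ 0) ij; rewrite /= /rot !nth_cat !size_drop !size_tuple.
rewrite !subn_gt0 !ltn_ord !nth_drop !addn0 => /eqP.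
by rewrite nth_uniq ?size_tuple.
Qed.

Lemma rot_orbit_rot w k : uniq w -> rot_orbit (rot_tuple k w) = rot_orbit w.
Proof.
move=> uw; apply/eqP; rewrite eqEcard !card_rot_orbit ?rot_uniq // leqnn andbT.
apply/subsetP => _ /imsetP[j _ ->].
have := leq_rot_add k j w; rewrite size_tuple leq_eqVlt.
case/predU1P => [r_eq | r_lt]; apply/imsetP.
  exists (Ordinal n_gt0) => //; apply: val_inj; rewrite /= rot_rot_add r_eq rot0.
  by rewrite -{1}(size_tuple w) rot_size.
by exists (Ordinal r_lt) => //; apply: val_inj; rewrite /= rot_rot_add.
Qed.

Variable P : pred (n.-tuple T).
Hypothesis P_rot : forall k w, P w -> P (rot_tuple k w).
Hypothesis P_uniq : forall w, P w -> uniq w.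

Lemma rot_orbits_partition :
  partition [set rot_orbit w | w in [set w | P w]] [set w | P w].
Proof.
apply/and3P; split.
- apply/eqP/setP => w; apply/bigcupP/idP => [[_ /imsetP[v Pv ->]]|Pw].
    by case/imsetP => k _ ->; move: Pv; rewrite !inE; apply: P_rot.
  by exists (rot_orbit w); [apply: imset_f | apply: rot_orbit_id].
- apply/trivIsetP => _ _ /imsetP[v1 Pv1 ->] /imsetP[v2 Pv2 ->].
  rewrite -setI_eq0; apply: contraR => /set0Pn[_ /setIP[/imsetP[k1 _ ->] /imsetP[k2 _ eq12]]].
  move: Pv1 Pv2; rewrite !inE => /P_uniq u1 /P_uniq u2.
  by rewrite -(rot_orbit_rot k1 u1) eq12 rot_orbit_rot.
- apply/imsetP => [[w Pw orbit0]].
  by have := rot_orbit_id w; rewrite -orbit0 inE.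
Qed.

Lemma card_rot_orbits :
  #|[set w | P w]| = (n * #|[set rot_orbit w | w in [set w | P w]]|)%N.
Proof.
rewrite (card_partition rot_orbits_partition) (eq_bigr (fun _ => n)).
  by rewrite sum_nat_const mulnC.
by move=> _ /imsetP[w + ->]; rewrite inE => /P_uniq /card_rot_orbit.
Qed.

End RotationOrbits.

Section EulerWalks.
Variables (V : nat) (e : rel 'I_V).
Hypothesis sg : simple_graph e.

Lemma card_dedges_B_Euler b : b \in B_Euler e -> #|dedges e| = (2 * #|b|)%N.
Proof.
case: sg => sym irr; rewrite inE => /andP[bE /forall_inP one_orient].
have swapK : involutive (@swap_de V) by case.
have -> : dedges e = b :|: @swap_de V @^-1: b.
  apply/setP => p; rewrite !inE; apply/idP/idP => [pE | /orP[pb|spb]].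
  - by have := one_orient p; rewrite inE => /(_ pE); case: (p \in b); case: (_ \in b).
  - by have := subsetP bE p pb; rewrite inE.
  - by have := subsetP bE _ spb; rewrite !inE /= sym.
rewrite cardsU card_preimset; last exact: inv_inj swapK.
suff -> : b :&: @swap_de V @^-1: b = set0 by rewrite cards0 subn0 mul2n addnn.
apply/setP => p; rewrite !inE; apply/negP => /andP[pb spb].
by have := one_orient p (subsetP bE p pb); rewrite pb spb.
Qed.

Lemma nedges_B_Euler b : b \in B_Euler e -> nedges e = #|b|.
Proof. by move=> bB; rewrite /nedges (card_dedges_B_Euler bB) mulKn. Qed.

Lemma ltn_orientation_B_Euler : [set p in dedges e | (p.1 < p.2)%N] \in B_Euler e.
Proof.
case: sg => sym irr; rewrite inE; apply/andP; split.
  by apply/subsetP => p; rewrite inE => /andP[].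
apply/forall_inP => p; rewrite !inE /= => pE; rewrite [e p.2 p.1]sym pE /=.
have : p.1 != p.2 by apply: contraTneq pE => ->; rewrite irr.
by rewrite -(inj_eq val_inj) /=; case: ltngtP.
Qed.

Lemma card_dedges : #|dedges e| = (2 * nedges e)%N.
Proof.
have b0B := ltn_orientation_B_Euler.
by rewrite (nedges_B_Euler b0B) (card_dedges_B_Euler b0B).
Qed.

Lemma uniq_supp_B_Euler (w : (nedges e).-tuple ('I_V * 'I_V)) :
  [set p in w] \in B_Euler e -> uniq w.
Proof.
move=> /nedges_B_Euler; rewrite cardsE => card_w.
by apply/card_uniqP; rewrite size_tuple.
Qed.

Lemma is_euler_walkE (w : (nedges e).-tuple ('I_V * 'I_V)) :
  is_euler_walk w = cycle chained w && ([set p in w] \in B_Euler e).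
Proof.
rewrite /is_euler_walk forall_chained_tuple inE -all_mem_subset.
apply/and3P/and3P => [[aw cw /forall_inP once]|[cw aw /forall_inP orient]].
  split=> //; apply/forall_inP => p /once; rewrite !inE -!has_pred1 !has_count.
  by case: (count _ _) => [|[|?]]; case: (count _ _) => [|[|?]].
have uw : uniq w.
  by apply: uniq_supp_B_Euler; rewrite inE -all_mem_subset aw; apply/forall_inP.
split=> //; apply/forall_inP => p /orient; rewrite !count_uniq_mem // !inE.
by case: (p \in w); case: (_ \in w).
Qed.

Lemma sum_Nb_B_Euler : (0 < nedges e)%N ->
  \sum_(b in B_Euler e) Nb e b =
  #|[set w : (nedges e).-tuple ('I_V * 'I_V) | is_euler_walk w]|%:R.
Proof.
move=> m_gt0; under eq_bigr do rewrite NbE //.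
rewrite exchange_big -sum1_card natr_sum [RHS]big_mkcond /=.
apply: eq_bigr => w _; rewrite inE is_euler_walkE.
case: (cycle _ _) => /=; last by rewrite big1.
case: (boolP ([set p in w] \in B_Euler e)) => wB.
  rewrite (bigD1 [set p in w]) //= eqxx big1 ?addr0 // => b /andP[_ wb].
  by rewrite eq_sym (negbTE wb).
by rewrite big1 // => b bB; case: eqP => // wb; rewrite wb bB in wB.
Qed.

Lemma is_euler_walk_rot k (w : (nedges e).-tuple ('I_V * 'I_V)) :
  is_euler_walk w -> is_euler_walk (rot_tuple k w).
Proof.
rewrite !is_euler_walkE /= rot_cycle => /andP[-> wB] /=.
suff -> : [set p in rot k w] = [set p in w] by [].
by apply/setP => p; rewrite !inE mem_rot.
Qed.

Lemma is_euler_walk_uniq (w : (nedges e).-tuple ('I_V * 'I_V)) :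
  is_euler_walk w -> uniq w.
Proof. by rewrite is_euler_walkE => /andP[_ /uniq_supp_B_Euler]. Qed.

Lemma card_euler_walks : (0 < nedges e)%N ->
  #|[set w : (nedges e).-tuple ('I_V * 'I_V) | is_euler_walk w]| = (nedges e * N_Euler e)%N.
Proof.
by move=> m_gt0; exact (card_rot_orbits m_gt0 is_euler_walk_rot is_euler_walk_uniq).
Qed.

End EulerWalks.

Theorem mainTheorem7 (V : nat) (e : rel 'I_V) :
  simple_graph e -> (0 < #|dedges e|)%N ->
  (N_Euler e)%:R = (2%:R / (#|dedges e|)%:R : rat) *
                   \sum_(b in B_Euler e) (Nb e b)%:~R.
Proof.
move=> sg E_gt0; have card_E := card_dedges sg.
have m_gt0 : (0 < nedges e)%N by move: E_gt0; rewrite card_E muln_gt0.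
rewrite -rmorph_sum /= sum_Nb_B_Euler // card_euler_walks // card_E.
have m_neq0 : (nedges e)%:R != 0 :> rat by rewrite pnatr_eq0 -lt0n.
by rewrite mulrz_nat !natrM; field; rewrite m_neq0.
Qed.
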